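(* Let $C\in\{0.15,0.45\}$ and define on $[-\pi,\pi]$ $$z_1(x)=2e^{1-\frac{1}{1-(x/\pi)^2}}-1,\qquad z_2(x)=\sin(x-C),$$ where $z_1(\pm\pi)=-1$ (the continuous, indeed smooth, extension). Then the curvature $$K(x)=\frac{-\partial_{xx}z_1(x)\,\partial_x z_2(x)+\partial_{xx}z_2(x)\,\partial_x z_1(x)}{\big(\partial_x z_1(x)^2+\partial_x z_2(x)^2\big)^{3/2}}$$ of the closed curve $x\mapsto(z_1(x),z_2(x))$ vanishes, for $x\in(-\pi,\pi]$, only at $x=\pi$.
   Context: Derivatives of $z_1$ at $x=\pm\pi$ are understood as limits (all of them equal $0$); the curve $(z_1,z_2)$ is regarded as $2\pi$-periodic, so $x=-\pi$ and $x=\pi$ represent the same point. *)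

From Stdlib Require Import Reals.
From Coquelicot Require Import Coquelicot.
Open Scope R_scope.

(* This is the smooth
   (flat) extension; in particular z1(+-pi) = -1 and all derivatives at
   +-pi exist and equal 0, i.e. they coincide with the limits. *)
Definition z1 (x : R) : R :=
  if Rlt_dec (Rabs x) PI
  then 2 * exp (1 - 1 / (1 - (x / PI) ^ 2)) - 1
  else -1.

Definition z2 (C : R) (x : R) : R := sin (x - C).

Definition K (C : R) (x : R) : R :=
  (- Derive_n z1 2 x * Derive (z2 C) x + Derive_n (z2 C) 2 x * Derive z1 x)
  / Rpower (Derive z1 x ^ 2 + Derive (z2 C) x ^ 2) (3 / 2).

(* On (-PI, PI) we have z1 x = 2 exp (1 - PI^2 / (PI^2 - x^2)) - 1, hence
   z1' x = - w x * x * (PI^2 - x^2)^2 and z1'' x = w x * (3 x^4 - PI^4) with the positive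
   weight w x = 4 PI^2 exp (1 - PI^2 / (PI^2 - x^2)) / (PI^2 - x^2)^4.  The numerator of K is
   therefore - w x * G x, where G x = (3 x^4 - PI^4) cos (x - C) - x (PI^2 - x^2)^2 sin (x - C).
   For both values of C, G < 0 on [-3.15, 3.15] is certified by interval arithmetic over Q
   (Taylor enclosures of sin, Lipschitz widening, bisection run by vm_compute), so K > 0 on
   (-PI, PI).  At PI, exp (- PI^2 / d) = O(d^n) for every n makes z1 flat: z1'(PI) = z1''(PI) = 0,
   so the numerator, hence K, vanishes. *)

From Stdlib Require Import Reals Lra Lia Factorial QArith Qreals Qminmax Qround.
From Coquelicot Require Import Coquelicot.
Open Scope R_scope.

(** * Interval arithmetic over Q *)

Lemma Rmult_ge_corners a b c d x y m :
  a <= x <= b -> c <= y <= d ->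
  m <= a * c -> m <= a * d -> m <= b * c -> m <= b * d -> m <= x * y.
Proof.
  intros Hx Hy. destruct (Rle_lt_dec 0 y), (Rle_lt_dec 0 a), (Rle_lt_dec 0 b); nra.
Qed.

Lemma Rmult_le_corners a b c d x y M :
  a <= x <= b -> c <= y <= d ->
  a * c <= M -> a * d <= M -> b * c <= M -> b * d <= M -> x * y <= M.
Proof.
  intros Hx Hy ? ? ? ?.
  enough (- M <= x * - y) by lra.
  apply (Rmult_ge_corners a b (- d) (- c)); lra.
Qed.

Lemma Q2R_min p q : Q2R (Qmin p q) = Rmin (Q2R p) (Q2R q).
Proof.
  destruct (Q.min_spec_le p q) as [[H E] | [H E]]; rewrite (Qeq_eqR _ _ E).
  - now rewrite Rmin_left by now apply Qle_Rle.
  - now rewrite Rmin_right by now apply Qle_Rle.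
Qed.

Lemma Q2R_max p q : Q2R (Qmax p q) = Rmax (Q2R p) (Q2R q).
Proof.
  destruct (Q.max_spec_le p q) as [[H E] | [H E]]; rewrite (Qeq_eqR _ _ E).
  - now rewrite Rmax_right by now apply Qle_Rle.
  - now rewrite Rmax_left by now apply Qle_Rle.
Qed.

Lemma Q2R_inject_Z z : Q2R (inject_Z z) = IZR z.
Proof. unfold Q2R; simpl; field. Qed.

Lemma Q2R_pow q n : Q2R (q ^ Z.of_nat n) = Q2R q ^ n.
Proof. rewrite RMicromega.Q2RpowerRZ, pow_powerRZ; [reflexivity | right; lia]. Qed.

Lemma Q2R_half q : Q2R (q * (1 # 2)) = Q2R q / 2.
Proof. rewrite Q2R_mult; unfold Q2R at 2; simpl; field. Qed.

Ltac q2r := unfold Q2R; simpl; lra.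

Record itv := Itv { lo : Q; hi : Q }.

Definition mem (I : itv) (x : R) : Prop := Q2R (lo I) <= x <= Q2R (hi I).

Definition iconst (q : Q) : itv := Itv q q.
Definition iadd (I J : itv) : itv := Itv (lo I + lo J) (hi I + hi J).
Definition iopp (I : itv) : itv := Itv (- hi I) (- lo I).
Definition isub (I J : itv) : itv := iadd I (iopp J).
Definition iwiden (I : itv) (r : Q) : itv := Itv (lo I - r) (hi I + r).

(* Outward rounding to multiples of [2^-20] keeps the size of the rationals bounded. *)
Definition round_down (q : Q) : Q :=
  (inject_Z (Qfloor (q * (2 ^ 20 # 1))) * (1 # 2 ^ 20))%Q.

Definition iround (I : itv) : itv := Itv (round_down (lo I)) (- round_down (- hi I)).

Definition imul (I J : itv) : itv :=
  let p1 := (lo I * lo J)%Q in let p2 := (lo I * hi J)%Q in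
  let p3 := (hi I * lo J)%Q in let p4 := (hi I * hi J)%Q in
  iround (Itv (Qmin (Qmin p1 p2) (Qmin p3 p4)) (Qmax (Qmax p1 p2) (Qmax p3 p4))).

(* [Qred] matters: without it the denominators square at every bisection step. *)
Definition mid (I : itv) : Q := Qred ((lo I + hi I) * (1 # 2)).
Definition rad (I : itv) : Q := ((hi I - lo I) * (1 # 2))%Q.

Lemma round_down_le q : (round_down q <= q)%Q.
Proof.
  unfold round_down; rewrite <- (Qmult_1_r q) at 2.
  setoid_replace 1%Q with ((2 ^ 20 # 1) * (1 # 2 ^ 20))%Q by reflexivity.
  rewrite Qmult_assoc; apply Qmult_le_compat_r; [apply Qfloor_le | discriminate].
Qed.

Lemma mem_iconst q : mem (iconst q) (Q2R q).
Proof. unfold mem; simpl; lra. Qed.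

Lemma mem_iadd {I J x y} : mem I x -> mem J y -> mem (iadd I J) (x + y).
Proof. unfold mem; simpl; rewrite !Q2R_plus; lra. Qed.

Lemma mem_iopp {I x} : mem I x -> mem (iopp I) (- x).
Proof. unfold mem; simpl; rewrite !Q2R_opp; lra. Qed.

Lemma mem_isub {I J x y} : mem I x -> mem J y -> mem (isub I J) (x - y).
Proof. intros HI HJ; exact (mem_iadd HI (mem_iopp HJ)). Qed.

Lemma mem_iwiden {I x} r y : mem I x -> Rabs (y - x) <= Q2R r -> mem (iwiden I r) y.
Proof.
  unfold mem; simpl; rewrite Q2R_minus, Q2R_plus; intros ? ?%Rabs_le_between; lra.
Qed.

Lemma mem_iround {I x} : mem I x -> mem (iround I) x.
Proof.
  unfold mem, iround; simpl; rewrite Q2R_opp; intros [Hlo Hhi].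
  pose proof (Qle_Rle _ _ (round_down_le (lo I))).
  pose proof (Qle_Rle _ _ (round_down_le (- hi I))) as Hh.
  rewrite Q2R_opp in Hh; lra.
Qed.

Lemma mem_imul {I J x y} : mem I x -> mem J y -> mem (imul I J) (x * y).
Proof.
  intros Hx Hy; apply mem_iround; unfold mem in *; simpl.
  rewrite Q2R_min, !Q2R_min, Q2R_max, !Q2R_max, !Q2R_mult; split.
  - apply (Rmult_ge_corners _ _ _ _ _ _ _ Hx Hy); unfold Rmin; repeat destruct Rle_dec; lra.
  - apply (Rmult_le_corners _ _ _ _ _ _ _ Hx Hy); unfold Rmax; repeat destruct Rle_dec; lra.
Qed.

Lemma mem_mid_rad {I x} : mem I x -> Rabs (x - Q2R (mid I)) <= Q2R (rad I).
Proof.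
  unfold mem, mid, rad.
  rewrite (Qeq_eqR _ _ (Qred_correct _)), !Q2R_half, Q2R_plus, Q2R_minus.
  intros; apply Rabs_le_between; lra.
Qed.

(** * Enclosures of sine and cosine *)

Lemma sin_approx_opp t n : sin_approx (- t) n = - sin_approx t n.
Proof.
  assert (Hterm : forall i, sin_term (- t) i = - sin_term t i).
  { intro i; unfold sin_term; rewrite !pow_add, !pow_mult.
    replace ((- t) ^ 2) with (t ^ 2) by ring. unfold Rdiv. ring. }
  unfold sin_approx; induction n as [|n IH]; simpl sum_f_R0; rewrite ?IH, !Hterm; ring.
Qed.

Lemma sin_approx_error t n : -4 <= t <= 4 ->
  Rmin 0 (sin_term t (2 * n + 2)) <= sin t - sin_approx t (2 * n + 1) <=
  Rmax 0 (sin_term t (2 * n + 2)).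
Proof.
  intros Ht.
  assert (Hnext : sin_approx t (2 * (n + 1)) = sin_approx t (2 * n + 1) + sin_term t (2 * n + 2))
    by (replace (2 * (n + 1))%nat with (S (2 * n + 1)) by lia;
        replace (2 * n + 2)%nat with (S (2 * n + 1)) by lia; reflexivity).
  unfold Rmin, Rmax; destruct Rle_dec; destruct (Rle_lt_dec 0 t).
  all: try (destruct (pre_sin_bound t n); lra).
  all: destruct (pre_sin_bound (- t) n) as [Hl Hu]; [lra | lra |].
  all: rewrite sin_neg, !sin_approx_opp in Hl, Hu; lra.
Qed.

Lemma sin_lipschitz u v : Rabs (sin u - sin v) <= Rabs (u - v).
Proof.
  destruct (MVT_abs sin cos v u) as (c & E & _).
  { intros; apply derivable_pt_lim_sin. }
  rewrite E; generalize (Rabs_pos (u - v)) (Rabs_pos (cos c)).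
  assert (Rabs (cos c) <= 1) by (apply Rabs_le, COS_bound). nra.
Qed.

Lemma cos_lipschitz u v : Rabs (cos u - cos v) <= Rabs (u - v).
Proof.
  destruct (MVT_abs cos (fun t => - sin t) v u) as (c & E & _).
  { intros; apply derivable_pt_lim_cos. }
  rewrite E, Rabs_Ropp; generalize (Rabs_pos (u - v)) (Rabs_pos (sin c)).
  assert (Rabs (sin c) <= 1) by (apply Rabs_le, SIN_bound). nra.
Qed.

Fixpoint Qfact (n : nat) : Q :=
  match n with O => 1 | S m => (inject_Z (Z.of_nat n) * Qfact m)%Q end.

Definition sin_termQ (q : Q) (i : nat) : Q :=
  ((-1) ^ Z.of_nat i * (q ^ Z.of_nat (2 * i + 1) / Qfact (2 * i + 1)))%Q.

Fixpoint isin_approx (q : Q) (n : nat) : itv :=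
  match n with
  | O => iround (iconst (sin_termQ q 0))
  | S m => iadd (isin_approx q m) (iround (iconst (sin_termQ q n)))
  end.

Lemma Q2R_Qfact n : Q2R (Qfact n) = INR (fact n).
Proof.
  induction n as [|n IH]; [exact RMicromega.Q2R_1|].
  rewrite fact_simpl, mult_INR, (INR_IZR_INZ (S n)); cbn [Qfact].
  rewrite Q2R_mult, IH, Q2R_inject_Z.
  reflexivity.
Qed.

Lemma Q2R_sin_termQ q i : Q2R (sin_termQ q i) = sin_term (Q2R q) i.
Proof.
  unfold sin_termQ, sin_term; rewrite Q2R_mult, Q2R_div, !Q2R_pow, Q2R_Qfact.
  - now replace (Q2R (-1)) with (-1) by q2r.
  - intros H%Qeq_eqR; rewrite Q2R_Qfact, RMicromega.Q2R_0 in H; apply (INR_fact_neq_0 _ H).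
Qed.

Lemma mem_iround_sin_term q i : mem (iround (iconst (sin_termQ q i))) (sin_term (Q2R q) i).
Proof. rewrite <- Q2R_sin_termQ; apply mem_iround, mem_iconst. Qed.

Lemma mem_isin_approx q n : mem (isin_approx q n) (sin_approx (Q2R q) n).
Proof.
  unfold sin_approx; induction n as [|n IH]; [apply mem_iround_sin_term|].
  exact (mem_iadd IH (mem_iround_sin_term q (S n))).
Qed.

Definition sin_at (q : Q) : itv :=
  let T := iround (iconst (sin_termQ q 6)) in
  iadd (isin_approx q 5) (Itv (Qmin 0 (lo T)) (Qmax 0 (hi T))).

Lemma mem_sin_at q : -4 <= Q2R q <= 4 -> mem (sin_at q) (sin (Q2R q)).
Proof.
  intros Hq.
  replace (sin (Q2R q))
    with (sin_approx (Q2R q) 5 + (sin (Q2R q) - sin_approx (Q2R q) 5)) by ring.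
  apply (mem_iadd (mem_isin_approx q 5)).
  destruct (mem_iround_sin_term q 6) as [Hlo Hhi]; destruct (sin_approx_error _ 2 Hq) as [Hl Hu].
  unfold mem; simpl; rewrite Q2R_min, Q2R_max, RMicromega.Q2R_0.
  split.
  - apply (Rle_trans _ _ _ (Rle_min_compat_l _ _ _ Hlo) Hl).
  - apply (Rle_trans _ _ _ Hu (Rle_max_compat_l _ _ _ Hhi)).
Qed.

Definition in_sin_range (q : Q) : bool := (Qle_bool (-4) q && Qle_bool q 4)%bool.

Lemma in_sin_range_spec q : in_sin_range q = true -> -4 <= Q2R q <= 4.
Proof.
  unfold in_sin_range; intros [H1 H2]%andb_prop.
  apply RMicromega.Qle_true in H1, H2.
  replace (Q2R (-4)) with (-4) in H1 by q2r.
  replace (Q2R 4) with 4 in H2 by q2r. lra.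
Qed.

Lemma mem_unit_itv y : -1 <= y <= 1 -> mem (Itv (-1) 1) y.
Proof.
  unfold mem; simpl; rewrite RMicromega.Q2R_1.
  now replace (Q2R (-1)) with (-1) by q2r.
Qed.

Definition isin (I : itv) : itv :=
  let m := mid I in
  if in_sin_range m then iwiden (sin_at m) (rad I) else Itv (-1) 1.

Lemma mem_isin {I x} : mem I x -> mem (isin I) (sin x).
Proof.
  intros Hx; unfold isin; destruct (in_sin_range (mid I)) eqn:Hm.
  - apply (mem_iwiden (x := sin (Q2R (mid I)))); [now apply mem_sin_at, in_sin_range_spec |].
    apply (Rle_trans _ _ _ (sin_lipschitz _ _)), mem_mid_rad, Hx.
  - apply mem_unit_itv, SIN_bound.
Qed.

(* [cos m = 1 - 2 sin (m/2) ^ 2] keeps the argument of the sine series inside [-4, 4]. *)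
Definition icos (I : itv) : itv :=
  let h := Qred (mid I * (1 # 2)) in
  if in_sin_range h
  then iwiden (isub (iconst 1) (imul (iconst 2) (imul (sin_at h) (sin_at h)))) (rad I)
  else Itv (-1) 1.

Lemma mem_icos {I x} : mem I x -> mem (icos I) (cos x).
Proof.
  intros Hx; unfold icos; set (h := Qred (mid I * (1 # 2))).
  destruct (in_sin_range h) eqn:Hh.
  - apply (mem_iwiden (x := cos (Q2R (mid I)))).
    + replace (Q2R (mid I)) with (2 * Q2R h)
        by (unfold h; rewrite (Qeq_eqR _ _ (Qred_correct _)), Q2R_half; field).
      rewrite cos_2a_sin, Rmult_assoc, <- RMicromega.Q2R_1.
      replace 2 with (Q2R 2) by q2r.
      apply in_sin_range_spec, mem_sin_at in Hh.
      exact (mem_isub (mem_iconst 1) (mem_imul (mem_iconst 2) (mem_imul Hh Hh))).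
    + apply (Rle_trans _ _ _ (cos_lipschitz _ _)), mem_mid_rad, Hx.
  - apply mem_unit_itv, COS_bound.
Qed.

Lemma PI_bounds : 314 / 100 < PI < 315 / 100.
Proof.
  assert (Hlo : 0 < sin (314 / 100)).
  { replace (314 / 100) with (Q2R (314 # 100)) by q2r.
    apply (Rlt_le_trans _ (Q2R (lo (sin_at (314 # 100))))); [|apply mem_sin_at; q2r].
    rewrite <- RMicromega.Q2R_0; apply Qlt_Rlt; vm_compute; reflexivity. }
  assert (Hhi : sin (315 / 100) < 0).
  { replace (315 / 100) with (Q2R (315 # 100)) by q2r.
    apply (Rle_lt_trans _ (Q2R (hi (sin_at (315 # 100))))); [apply mem_sin_at; q2r|].
    rewrite <- RMicromega.Q2R_0; apply Qlt_Rlt; vm_compute; reflexivity. }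
  split; apply Rnot_le_lt; intro H.
  - enough (sin (314 / 100) <= 0) by lra.
    apply sin_le_0; generalize PI2_3_2; lra.
  - enough (0 <= sin (315 / 100)) by lra.
    apply sin_ge_0; lra.
Qed.

Definition pi_itv : itv := Itv (314 # 100) (315 # 100).

Lemma mem_pi_itv : mem pi_itv PI.
Proof. unfold mem; simpl; generalize PI_bounds; q2r. Qed.

(** * Sign of the curvature on (-PI, PI) *)

Definition curvature_core (C x : R) : R :=
  (3 * x ^ 4 - PI ^ 4) * cos (x - C) - x * (PI ^ 2 - x ^ 2) ^ 2 * sin (x - C).

Definition curvature_core_itv (C : Q) (X : itv) : itv :=
  let X2 := imul X X in
  let P2 := imul pi_itv pi_itv in
  let U := isub X (iconst C) in
  isub (imul (isub (imul (iconst 3) (imul X2 X2)) (imul P2 P2)) (icos U))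
       (imul (imul X (imul (isub P2 X2) (isub P2 X2))) (isin U)).

Definition itv_extension (F : itv -> itv) (f : R -> R) : Prop :=
  forall I x, mem I x -> mem (F I) (f x).

Lemma curvature_core_itv_extension C :
  itv_extension (curvature_core_itv C) (curvature_core (Q2R C)).
Proof.
  intros I x Hx; unfold curvature_core, curvature_core_itv.
  replace (3 * x ^ 4 - PI ^ 4) with
    (Q2R 3 * ((x * x) * (x * x)) - (PI * PI) * (PI * PI))
    by (replace (Q2R 3) with 3 by q2r; ring).
  replace (x * (PI ^ 2 - x ^ 2) ^ 2) with
    (x * ((PI * PI - x * x) * (PI * PI - x * x))) by ring.
  pose proof (mem_imul Hx Hx) as HX2.
  pose proof (mem_imul mem_pi_itv mem_pi_itv) as HP2.
  pose proof (mem_isub Hx (mem_iconst C)) as HU.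
  exact (mem_isub
    (mem_imul (mem_isub (mem_imul (mem_iconst 3) (mem_imul HX2 HX2)) (mem_imul HP2 HP2))
              (mem_icos HU))
    (mem_imul (mem_imul Hx (mem_imul (mem_isub HP2 HX2) (mem_isub HP2 HX2))) (mem_isin HU))).
Qed.

(* Written with [if] rather than [&&]/[||]: [vm_compute] evaluates the arguments of a
   function call eagerly, which would bisect every branch to full depth. *)
Fixpoint neg_by_bisection (F : itv -> itv) (n : nat) (a b : Q) : bool :=
  if Qle_bool 0 (hi (F (Itv a b))) then
    match n with
    | O => false
    | S n => let m := mid (Itv a b) in
             if neg_by_bisection F n a m then neg_by_bisection F n m b else false
    end
  else true.

Lemma neg_by_bisection_sound F f n a b : itv_extension F f -> neg_by_bisection F n a b = true ->
  forall x, Q2R a <= x <= Q2R b -> f x < 0.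
Proof.
  intros HF; revert a b; induction n as [|n IH]; intros a b Hn x Hx; cbn [neg_by_bisection] in Hn.
  all: destruct (Qle_bool 0 (hi (F (Itv a b)))) eqn:Hhi.
  2, 4: apply (Rle_lt_trans _ _ _ (proj2 (HF (Itv a b) x Hx)));
        rewrite <- RMicromega.Q2R_0; apply Qlt_Rlt, Qnot_le_lt;
        now rewrite <- Qle_bool_iff, Hhi.
  - discriminate.
  - destruct (neg_by_bisection F n a (mid (Itv a b))) eqn:Hl; [|discriminate].
    destruct (Rle_lt_dec x (Q2R (mid (Itv a b)))).
    + apply (IH _ _ Hl); lra.
    + apply (IH _ _ Hn); lra.
Qed.

Lemma curvature_core_neg_of_bisection c n :
  neg_by_bisection (curvature_core_itv c) n (-315 # 100) (315 # 100) = true ->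
  forall x, - PI < x < PI -> curvature_core (Q2R c) x < 0.
Proof.
  intros Hbis x Hx; apply (neg_by_bisection_sound _ _ _ _ _ (curvature_core_itv_extension c) Hbis).
  generalize PI_bounds; q2r.
Qed.

Lemma curvature_core_neg C : C = 15 / 100 \/ C = 45 / 100 ->
  forall x, - PI < x < PI -> curvature_core C x < 0.
Proof.
  intros [-> | ->].
  - replace (15 / 100) with (Q2R (15 # 100)) by q2r.
    apply (curvature_core_neg_of_bisection _ 10); vm_compute; reflexivity.
  - replace (45 / 100) with (Q2R (45 # 100)) by q2r.
    apply (curvature_core_neg_of_bisection _ 10); vm_compute; reflexivity.
Qed.


(** * Derivatives of z1 inside (-PI, PI) *)

Definition bump (x : R) : R := 2 * exp (1 - PI ^ 2 / (PI ^ 2 - x ^ 2)) - 1.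

Definition bump_weight (x : R) : R :=
  4 * PI ^ 2 * exp (1 - PI ^ 2 / (PI ^ 2 - x ^ 2)) / (PI ^ 2 - x ^ 2) ^ 4.

(* [auto_derive] expands the exponent; rewriting every [exp] back to the common
   exponent lets [field] treat it as an atom. *)
Ltac bump_field x Hd :=
  repeat match goal with
  | |- context [exp ?a] =>
      lazymatch a with
      | 1 - PI ^ 2 / (PI ^ 2 - x ^ 2) => fail
      | _ => replace a with (1 - PI ^ 2 / (PI ^ 2 - x ^ 2))
               by (field; contradict Hd; lra)
      end
  end;
  field; contradict Hd; lra.

Ltac bump_nonzero x Hd :=
  assert (PI * (PI * 1) + - (x * (x * 1)) <> 0) by (contradict Hd; lra);
  repeat split; repeat apply Rmult_integral_contrapositive_currified;
  auto using R1_neq_R0.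

Lemma is_derive_bump x : PI ^ 2 - x ^ 2 <> 0 ->
  is_derive bump x (- bump_weight x * x * (PI ^ 2 - x ^ 2) ^ 2).
Proof.
  intros Hd; unfold bump, bump_weight; auto_derive; [bump_nonzero x Hd | bump_field x Hd].
Qed.

Lemma is_derive_bump' x : PI ^ 2 - x ^ 2 <> 0 ->
  is_derive (fun t => - bump_weight t * t * (PI ^ 2 - t ^ 2) ^ 2) x
            (bump_weight x * (3 * x ^ 4 - PI ^ 4)).
Proof.
  intros Hd; unfold bump_weight; auto_derive; [bump_nonzero x Hd | bump_field x Hd].
Qed.

Lemma bump_denominator_pos x : Rabs x < PI -> 0 < PI ^ 2 - x ^ 2.
Proof. intros [? ?]%Rabs_def2; generalize PI_RGT_0; nra. Qed.

Lemma bump_weight_pos x : Rabs x < PI -> 0 < bump_weight x.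
Proof.
  intros Hx; assert (Hd := bump_denominator_pos x Hx); generalize PI_RGT_0; intros Hpi.
  unfold bump_weight; apply Rdiv_lt_0_compat; [| now apply pow_lt].
  apply Rmult_lt_0_compat; [nra | apply exp_pos].
Qed.

Lemma z1_eq_bump x : Rabs x < PI -> z1 x = bump x.
Proof.
  intros Hx; generalize (bump_denominator_pos x Hx) PI_neq0; intros Hd Hpi.
  unfold z1, bump; destruct Rlt_dec; [|contradiction].
  replace (1 - 1 / (1 - (x / PI) ^ 2)) with (1 - PI ^ 2 / (PI ^ 2 - x ^ 2)); [reflexivity|].
  field; split; lra.
Qed.

Lemma locally_abs_lt_PI x : Rabs x < PI -> locally x (fun t => Rabs t < PI).
Proof.
  intros [? ?]%Rabs_def2.
  apply (filter_imp (fun t => - PI < t /\ t < PI)); [intros t [? ?]; now apply Rabs_def1|].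
  apply (open_and _ _ (open_gt _) (open_lt _)); now split.
Qed.

Lemma Derive_z1_inside x : Rabs x < PI ->
  Derive z1 x = - bump_weight x * x * (PI ^ 2 - x ^ 2) ^ 2.
Proof.
  intros Hx; apply is_derive_unique, (is_derive_ext_loc bump).
  - apply (filter_imp _ _ (fun t Ht => eq_sym (z1_eq_bump t Ht)) (locally_abs_lt_PI x Hx)).
  - apply is_derive_bump, Rgt_not_eq, bump_denominator_pos, Hx.
Qed.

Lemma Derive2_z1_inside x : Rabs x < PI ->
  Derive_n z1 2 x = bump_weight x * (3 * x ^ 4 - PI ^ 4).
Proof.
  intros Hx; apply is_derive_unique.
  apply (is_derive_ext_loc (fun t => - bump_weight t * t * (PI ^ 2 - t ^ 2) ^ 2)).
  - apply (filter_imp _ _ (fun t Ht => eq_sym (Derive_z1_inside t Ht)) (locally_abs_lt_PI x Hx)).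
  - apply is_derive_bump', Rgt_not_eq, bump_denominator_pos, Hx.
Qed.

(** * Flatness of z1 at PI *)

Lemma z1_right x : PI <= x -> z1 x = -1.
Proof.
  intros Hx; generalize PI_RGT_0; intros Hpi; unfold z1.
  destruct Rlt_dec as [H|]; [rewrite Rabs_right in H; lra | reflexivity].
Qed.

Lemma Derive_z1_right x : PI < x -> Derive z1 x = 0.
Proof.
  intros Hx; apply is_derive_unique, (is_derive_ext_loc (fun _ => -1)).
  - apply (filter_imp (fun t => PI < t)); [intros t Ht; symmetry; apply z1_right; lra|].
    now apply open_gt.
  - apply is_derive_Reals, derivable_pt_lim_const.
Qed.

Lemma exp_ge_pow_div_fact x n : 0 <= x -> x ^ n / INR (fact n) <= exp x.
Proof.
  intros Hx; refine (Rle_trans _ _ _ _ (exp_ge_taylor x n Hx)).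
  assert (Hterm : forall k, 0 <= x ^ k / INR (fact k))
    by (intro k; apply Rdiv_le_0_compat; [now apply pow_le | apply INR_fact_lt_0]).
  destruct n as [|n]; [apply Rle_refl|].
  cbn [sum_f_R0]; generalize (cond_pos_sum _ n Hterm); lra.
Qed.

Lemma exp_bump_exponent_le n d : 0 < d ->
  exp (1 - PI ^ 2 / d) <= exp 1 * INR (fact n) * (d / PI ^ 2) ^ n.
Proof.
  intros Hd; generalize PI_neq0; intros Hpi.
  set (B := PI ^ 2 / d); assert (HB : 0 < B) by (apply Rdiv_lt_0_compat; [nra | lra]).
  assert (Hfact := INR_fact_lt_0 n); assert (HBn := pow_lt _ n HB).
  assert (HexpB := exp_ge_pow_div_fact B n (Rlt_le _ _ HB)).
  replace (d / PI ^ 2) with (/ B) by (unfold B; field; lra).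
  rewrite pow_inv; unfold Rminus; rewrite exp_plus, exp_Ropp.
  replace (exp 1 * INR (fact n) * / B ^ n) with (exp 1 * / (B ^ n / INR (fact n)))
    by (field; lra).
  apply Rmult_le_compat_l; [apply Rlt_le, exp_pos|].
  apply Rinv_le_contravar; [apply Rdiv_lt_0_compat|]; assumption.
Qed.

Lemma is_derive_0_of_quadratic_increment g x d M : 0 < d ->
  (forall h, h <> 0 -> Rabs h < d -> Rabs (g (x + h) - g x) <= M * h ^ 2) ->
  is_derive g x 0.
Proof.
  intros Hd Hg; apply is_derive_Reals; intros eps Heps.
  assert (HM : 0 < Rabs M + 1) by (generalize (Rabs_pos M); lra).
  assert (Hdelta : 0 < Rmin d (eps / (Rabs M + 1)))
    by (apply Rmin_pos; [| apply Rdiv_lt_0_compat]; assumption).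
  exists (mkposreal _ Hdelta); intros h Hh0 Hh; simpl in Hh.
  assert (Hh1 := Rlt_le_trans _ _ _ Hh (Rmin_l _ _)).
  assert (Hh2 := Rlt_le_trans _ _ _ Hh (Rmin_r _ _)).
  assert (Hpos : 0 < Rabs h) by now apply Rabs_pos_lt.
  specialize (Hg h Hh0 Hh1).
  rewrite Rminus_0_r; unfold Rdiv; rewrite Rabs_mult, Rabs_inv.
  apply (Rle_lt_trans _ ((Rabs M + 1) * Rabs h)).
  - apply (Rmult_le_reg_r (Rabs h)); [assumption|].
    rewrite Rmult_assoc, Rinv_l, Rmult_1_r by lra.
    rewrite <- pow2_abs in Hg; generalize (Rle_abs M); nra.
  - apply (Rmult_lt_compat_l (Rabs M + 1)) in Hh2; [|assumption].
    replace ((Rabs M + 1) * (eps / (Rabs M + 1))) with eps in Hh2 by (field; lra).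
    exact Hh2.
Qed.

Lemma PI_plus_neg_bounds h : - PI < h < 0 ->
  Rabs (PI + h) < PI /\ 0 < PI ^ 2 - (PI + h) ^ 2 <= 2 * PI * - h.
Proof.
  intros Hh; rewrite Rabs_right by lra; repeat split; nra.
Qed.

Lemma bump_exponent_ratio_le h d : - PI < h < 0 -> 0 < d <= 2 * PI * - h ->
  0 <= d / PI ^ 2 <= 2 * - h / PI.
Proof.
  intros Hh Hd; generalize PI_RGT_0; intros Hpi; split.
  - apply Rdiv_le_0_compat; nra.
  - replace (2 * - h / PI) with (2 * PI * - h / PI ^ 2) by (field; lra).
    apply Rmult_le_compat_r; [apply Rlt_le, Rinv_0_lt_compat; nra | lra].
Qed.

Lemma z1_increment_left_of_PI h : - PI < h < 0 ->
  Rabs (z1 (PI + h) - z1 PI) <= 16 * exp 1 / PI ^ 2 * h ^ 2.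
Proof.
  intros Hh; destruct (PI_plus_neg_bounds h Hh) as [Hx Hd].
  rewrite z1_eq_bump, z1_right by (auto || lra); unfold bump.
  set (d := PI ^ 2 - (PI + h) ^ 2) in *.
  replace (2 * exp (1 - PI ^ 2 / d) - 1 - -1) with (2 * exp (1 - PI ^ 2 / d)) by ring.
  rewrite Rabs_right by (apply Rle_ge, Rlt_le, Rmult_lt_0_compat; [lra | apply exp_pos]).
  assert (HE := exp_bump_exponent_le 2 d (proj1 Hd)); simpl (INR (fact 2)) in HE.
  assert (Hq := pow_incr _ _ 2 (bump_exponent_ratio_le h d Hh Hd)).
  replace (16 * exp 1 / PI ^ 2 * h ^ 2) with (4 * exp 1 * (2 * - h / PI) ^ 2)
    by (field; apply PI_neq0).
  generalize (exp_pos 1); nra.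
Qed.

Lemma Derive_z1_left_of_PI h : - PI < h < 0 ->
  Rabs (Derive z1 (PI + h)) <= 384 * exp 1 / PI ^ 3 * h ^ 2.
Proof.
  intros Hh; destruct (PI_plus_neg_bounds h Hh) as [Hx Hd].
  generalize PI_RGT_0; intros Hpi.
  rewrite Derive_z1_inside by assumption; unfold bump_weight.
  set (x := PI + h) in *; set (d := PI ^ 2 - x ^ 2) in *.
  assert (Hx0 : 0 < x <= PI) by (unfold x; lra).
  set (E := exp (1 - PI ^ 2 / d)).
  assert (HE := exp_bump_exponent_le 4 d (proj1 Hd)); fold E in HE.
  replace (INR (fact 4)) with 24 in HE by (simpl; lra).
  assert (Hq := pow_incr _ _ 2 (bump_exponent_ratio_le h d Hh Hd)).
  set (q := d / PI ^ 2) in *.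
  assert (Hq0 : 0 < q) by (apply Rdiv_lt_0_compat; nra).
  replace (- (4 * PI ^ 2 * E / d ^ 4) * x * d ^ 2) with (- (4 * E * x / (PI ^ 2 * q ^ 2)))
    by (unfold q; field; split; lra).
  rewrite Rabs_Ropp, Rabs_right.
  2: { apply Rle_ge, Rlt_le, Rdiv_lt_0_compat; [| apply Rmult_lt_0_compat; apply pow_lt; lra].
       apply Rmult_lt_0_compat; [apply Rmult_lt_0_compat; [lra | apply exp_pos] | lra]. }
  assert (Hpq : 0 < PI ^ 2 * q ^ 2) by (apply Rmult_lt_0_compat; apply pow_lt; lra).
  apply (Rle_trans _ (96 * exp 1 * q ^ 2 / PI)).
  - apply (Rmult_le_reg_r (PI ^ 2 * q ^ 2)); [assumption|].
    replace (4 * E * x / (PI ^ 2 * q ^ 2) * (PI ^ 2 * q ^ 2)) with (4 * E * x) by (field; lra).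
    replace (96 * exp 1 * q ^ 2 / PI * (PI ^ 2 * q ^ 2)) with (4 * (exp 1 * 24 * q ^ 4) * PI)
      by (field; lra).
    apply Rmult_le_compat; [| lra | apply Rmult_le_compat_l; lra | lra].
    generalize (exp_pos (1 - PI ^ 2 / d)); fold E; lra.
  - replace (384 * exp 1 / PI ^ 3 * h ^ 2) with (96 * exp 1 * (2 * - h / PI) ^ 2 / PI)
      by (field; lra).
    apply Rmult_le_compat_r; [apply Rlt_le, Rinv_0_lt_compat; lra|].
    generalize (exp_pos 1); nra.
Qed.

Lemma Derive_z1_PI : Derive z1 PI = 0.
Proof.
  apply is_derive_unique, (is_derive_0_of_quadratic_increment _ _ PI (16 * exp 1 / PI ^ 2)).
  { apply PI_RGT_0. }
  intros h Hh0 Hh; destruct (Rlt_or_le h 0) as [Hneg | Hpos].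
  - apply z1_increment_left_of_PI; apply Rabs_def2 in Hh; lra.
  - rewrite !z1_right, Rminus_eq_0, Rabs_R0 by lra.
    generalize (exp_pos 1) (pow_lt _ 2 PI_RGT_0) (pow2_ge_0 h); intros.
    apply Rmult_le_pos; [apply Rdiv_le_0_compat |]; lra.
Qed.

Lemma Derive2_z1_PI : Derive_n z1 2 PI = 0.
Proof.
  change (Derive_n z1 2 PI) with (Derive (Derive z1) PI).
  apply is_derive_unique, (is_derive_0_of_quadratic_increment _ _ PI (384 * exp 1 / PI ^ 3)).
  { apply PI_RGT_0. }
  intros h Hh0 Hh; rewrite Derive_z1_PI, Rminus_0_r.
  destruct (Rlt_or_le h 0) as [Hneg | Hpos].
  - apply Derive_z1_left_of_PI; apply Rabs_def2 in Hh; lra.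
  - rewrite Derive_z1_right, Rabs_R0 by lra.
    generalize (exp_pos 1) (pow_lt _ 3 PI_RGT_0) (pow2_ge_0 h); intros.
    apply Rmult_le_pos; [apply Rdiv_le_0_compat |]; lra.
Qed.

(** * The curvature *)

Lemma Derive_z2 C x : Derive (z2 C) x = cos (x - C).
Proof. apply is_derive_unique; unfold z2; auto_derive; [exact I | apply Rmult_1_l]. Qed.

Lemma Derive2_z2 C x : Derive_n (z2 C) 2 x = - sin (x - C).
Proof.
  change (Derive_n (z2 C) 2 x) with (Derive (Derive (z2 C)) x).
  rewrite (Derive_ext _ (fun t => cos (t - C)) _ (Derive_z2 C)).
  apply is_derive_unique; auto_derive; [exact I | rewrite Rmult_1_l; reflexivity].
Qed.

Lemma K_pos_inside C x : Rabs x < PI -> curvature_core C x < 0 -> 0 < K C x.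
Proof.
  intros Hx HG; unfold K.
  rewrite Derive2_z1_inside, Derive_z1_inside, Derive_z2, Derive2_z2 by assumption.
  apply Rdiv_lt_0_compat; [| unfold Rpower; apply exp_pos].
  replace (- (bump_weight x * (3 * x ^ 4 - PI ^ 4)) * cos (x - C) +
           - sin (x - C) * (- bump_weight x * x * (PI ^ 2 - x ^ 2) ^ 2))
    with (- bump_weight x * curvature_core C x) by (unfold curvature_core; ring).
  generalize (bump_weight_pos x Hx); nra.
Qed.

Theorem corollary1 (C : R) (hC : C = 15 / 100 \/ C = 45 / 100) :
  forall x : R, - PI < x <= PI -> (K C x = 0 <-> x = PI).
Proof.
  intros x [Hx1 Hx2]; split.
  - intros HK; destruct (Req_dec x PI) as [Hpi | Hne]; [exact Hpi | exfalso].
    assert (Hin : Rabs x < PI) by (apply Rabs_def1; lra).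
    assert (HG : curvature_core C x < 0) by (apply curvature_core_neg; [exact hC | lra]).
    generalize (K_pos_inside C x Hin HG); lra.
  - intros ->; unfold K; rewrite Derive_z1_PI, Derive2_z1_PI; unfold Rdiv; ring.
Qed.
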